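(* For all integers $n\ge1$: (1) $\sum_{k=1}^{n}(F_{k+1}+F_{k-1})F_k^3=F_n^2F_{n+1}^2$; (2) $\sum_{k=1}^{n}(P_{k+1}+P_{k-1})P_k^3=\frac12P_n^2P_{n+1}^2$; (3) $\sum_{k=1}^{n}4^{n-k}(J_{k+1}+2J_{k-1})J_k^3=J_n^2J_{n+1}^2$; (4) $\sum_{k=1}^{n}4^{n-k}(2^k+1)(2^k-1)^3=\frac13(2^n-1)^2(2^{n+1}-1)^2$; (5) for $q\neq1$, $\sum_{k=1}^{n}q^{2(n-k)}\left(\frac{1-q^{2k}}{1-q^2}\right)\left(\frac{1-q^k}{1-q}\right)^2=\left[{n+1\atop 2}\right]_q^2$.
   Context: $F_n$ are the Fibonacci numbers ($F_0=0,F_1=1,F_{n+2}=F_{n+1}+F_n$); $P_n$ the Pell numbers ($P_0=0,P_1=1,P_{n+2}=2P_{n+1}+P_n$); $J_n$ the Jacobsthal numbers ($J_0=0,J_1=1,J_{n+2}=J_{n+1}+2J_n$). $\left[{n+1\atop 2}\right]_q=\frac{(1-q^{n})(1-q^{n+1})}{(1-q)(1-q^2)}$ is the Gaussian binomial coefficient. *)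

From mathcomp Require Import all_boot all_order all_algebra.
Set Implicit Arguments. Unset Strict Implicit. Unset Printing Implicit Defensive.
Import Order.TTheory GRing.Theory Num.Theory.

Fixpoint fib (n : nat) : nat :=
  match n with
  | 0 => 0
  | 1 => 1
  | (m.+1 as p).+1 => fib p + fib m
  end.

Fixpoint pell (n : nat) : nat :=
  match n with
  | 0 => 0
  | 1 => 1
  | (m.+1 as p).+1 => 2 * pell p + pell m
  end.

Fixpoint jacobsthal (n : nat) : nat :=
  match n with
  | 0 => 0
  | 1 => 1
  | (m.+1 as p).+1 => jacobsthal p + 2 * jacobsthal m
  end.

Local Open Scope ring_scope.

(* Gaussian binomial [n+1 choose 2]_q = (1-q^n)(1-q^{n+1}) / ((1-q)(1-q^2)) *)
Definition gauss_binom2 (R : fieldType) (q : R) (n : nat) : R :=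
  ((1 - q ^+ n) * (1 - q ^+ n.+1)) / ((1 - q) * (1 - q ^+ 2)).

(* All five identities are one telescoping sum.  If a_{k+2} = s a_{k+1} + t a_k,
   then a_{k+1} - t a_{k-1} = s a_k, so
     a_k^2 a_{k+1}^2 - t^2 a_{k-1}^2 a_k^2 = s a_k^3 (a_{k+1} + t a_{k-1}),
   and summing with weights t^{2(n-k)} gives s times the left-hand side equal to
   a_n^2 a_{n+1}^2 when a_0 = 0.  The instances are Fibonacci (s, t) = (1, 1),
   Pell (2, 1), Jacobsthal (1, 2), a_k = 2^k - 1 with (3, -2), and the q-integers
   a_k = (1 - q^k)/(1 - q) with (1 + q, -q). *)

From mathcomp Require Import all_boot all_order all_algebra.
From mathcomp Require Import ring.
Set Implicit Arguments. Unset Strict Implicit. Unset Printing Implicit Defensive.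
Import Order.TTheory GRing.Theory Num.Theory.
Local Open Scope ring_scope.

Lemma weighted_sum_recr (R : comPzRingType) (c : R) (f : nat -> R) n :
  \sum_(1 <= k < n.+2) c ^+ (n.+1 - k) * f k
  = c * \sum_(1 <= k < n.+1) c ^+ (n - k) * f k + f n.+1.
Proof.
rewrite big_nat_recr //= subnn expr0 mul1r mulr_sumr; congr (_ + _).
by apply: eq_big_nat => k /andP[_ lt_kn]; rewrite subSn // exprS mulrA.
Qed.

Section LinearRecurrence.

Variables (R : comPzRingType) (s t : R) (a : nat -> R).
Hypothesis a_rec : forall k, a k.+2 = s * a k.+1 + t * a k.
Hypothesis a0 : a 0 = 0.

Lemma weighted_cube_sum n :
  s * \sum_(1 <= k < n.+1) (t ^+ 2) ^+ (n - k) * (a k.+1 + t * a k.-1) * a k ^+ 3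
  = a n ^+ 2 * a n.+1 ^+ 2.
Proof.
under eq_bigr do rewrite -mulrA.
elim: n => [|n IH]; first by rewrite big_geq // a0 expr0n mul0r mulr0.
by rewrite weighted_sum_recr mulrDr mulrCA IH /= a_rec; ring.
Qed.

End LinearRecurrence.

Lemma weighted_cube_sum_div (F : fieldType) (s t : F) (a : nat -> F) n :
  s != 0 -> (forall k, a k.+2 = s * a k.+1 + t * a k) -> a 0 = 0 ->
  \sum_(1 <= k < n.+1) (t ^+ 2) ^+ (n - k) * (a k.+1 + t * a k.-1) * a k ^+ 3
  = s^-1 * a n ^+ 2 * a n.+1 ^+ 2.
Proof. by move=> s_neq0 a_rec a0; rewrite -mulrA -(weighted_cube_sum a_rec a0) mulKf. Qed.

Lemma fib_cube_sum n :
  \sum_(1 <= k < n.+1) (((fib k.+1 + fib k.-1)%:R : rat) * (fib k)%:R ^+ 3)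
  = (fib n)%:R ^+ 2 * (fib n.+1)%:R ^+ 2.
Proof.
have fib_rec k : (fib k.+2)%:R = 1 * (fib k.+1)%:R + 1 * (fib k)%:R :> rat.
  by rewrite !mul1r -natrD.
rewrite -(weighted_cube_sum fib_rec) // mul1r.
by apply: eq_bigr => k _; rewrite !(expr1n, mul1r, natrD).
Qed.

Lemma pell_cube_sum n :
  \sum_(1 <= k < n.+1) (((pell k.+1 + pell k.-1)%:R : rat) * (pell k)%:R ^+ 3)
  = 2^-1 * (pell n)%:R ^+ 2 * (pell n.+1)%:R ^+ 2.
Proof.
have pell_rec k : (pell k.+2)%:R = 2 * (pell k.+1)%:R + 1 * (pell k)%:R :> rat.
  by rewrite mul1r /= natrD natrM.
rewrite -(weighted_cube_sum_div _ _ pell_rec) //.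
by apply: eq_bigr => k _; rewrite !(expr1n, mul1r, natrD).
Qed.

Lemma jacobsthal_cube_sum n :
  \sum_(1 <= k < n.+1) ((4 : rat) ^+ (n - k)
      * (jacobsthal k.+1 + 2 * jacobsthal k.-1)%:R * (jacobsthal k)%:R ^+ 3)
  = (jacobsthal n)%:R ^+ 2 * (jacobsthal n.+1)%:R ^+ 2.
Proof.
have jacobsthal_rec k :
    (jacobsthal k.+2)%:R = 1 * (jacobsthal k.+1)%:R + 2 * (jacobsthal k)%:R :> rat.
  by rewrite mul1r -natrM -natrD.
rewrite -(weighted_cube_sum jacobsthal_rec) // mul1r.
by apply: eq_bigr => k _; rewrite natrD natrM.
Qed.

Lemma mersenne_cube_sum n :
  \sum_(1 <= k < n.+1) ((4 : rat) ^+ (n - k) * (2 ^+ k + 1) * (2 ^+ k - 1) ^+ 3)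
  = 3^-1 * (2 ^+ n - 1) ^+ 2 * (2 ^+ n.+1 - 1) ^+ 2.
Proof.
have mersenne_rec k :
    (2 : rat) ^+ k.+2 - 1 = 3 * (2 ^+ k.+1 - 1) + (-2) * (2 ^+ k - 1).
  by rewrite !exprS; ring.
rewrite -(weighted_cube_sum_div (a := fun k => 2 ^+ k - 1) _ _ mersenne_rec) ?subrr //.
apply: eq_big_nat => -[//|k] _ /=.
by rewrite sqrrN !exprS; congr (_ * _ * _); ring.
Qed.

Lemma q_integer_cube_sum (R : fieldType) (q : R) n : q != 1 ->
  \sum_(1 <= k < n.+1) (q ^+ (2 * (n - k))
      * ((1 - q ^+ (2 * k)) / (1 - q ^+ 2)) * ((1 - q ^+ k) / (1 - q)) ^+ 2)
  = gauss_binom2 q n ^+ 2.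
Proof.
move=> q_neq1; have q1_neq0 : 1 - q != 0 by rewrite subr_eq0 eq_sym.
have q2_factor : 1 - q ^+ 2 = (1 - q) * (1 + q) by ring.
(* At q = -1 both sides are 0, since 1 - q^2 = 0 and 0^-1 = 0. *)
have [q_eqN1|q_neqN1] := eqVneq (1 + q) 0.
  rewrite /gauss_binom2 q2_factor q_eqN1 !mulr0 invr0 mulr0 expr0n /=.
  by rewrite big1 // => k _; rewrite !mulr0 mul0r.
have q2_neq0 : 1 - q ^+ 2 != 0 by rewrite q2_factor mulf_neq0.
pose a k := (1 - q ^+ k) / (1 - q).
have a_rec k : a k.+2 = (1 + q) * a k.+1 + (- q) * a k.
  by rewrite /a !exprS; field.
have a0 : a 0 = 0 by rewrite /a expr0 subrr mul0r.
have gauss_binom2E : gauss_binom2 q n = (1 + q)^-1 * (a n * a n.+1).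
  by rewrite /gauss_binom2 q2_factor /a; field; apply/andP.
transitivity ((1 + q)^-1 *
    \sum_(1 <= k < n.+1) ((- q) ^+ 2) ^+ (n - k) * (a k.+1 + - q * a k.-1) * a k ^+ 3).
  rewrite mulr_sumr; apply: eq_big_nat => -[//|k] _.
  rewrite sqrrN -exprM /a; set w := q ^+ (2 * (n - k.+1)).
  rewrite mulnC exprM (exprS q k.+1) (exprS q k).
  by set x := q ^+ k; field; apply/and3P.
rewrite (weighted_cube_sum_div _ _ a_rec) // gauss_binom2E.
by field.
Qed.

Theorem mainTheorem14 (n : nat) : (1 <= n)%N ->
  [/\ \sum_(1 <= k < n.+1) (((fib k.+1 + fib k.-1)%:R : rat) * (fib k)%:R ^+ 3)
        = (fib n)%:R ^+ 2 * (fib n.+1)%:R ^+ 2,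
      \sum_(1 <= k < n.+1) (((pell k.+1 + pell k.-1)%:R : rat) * (pell k)%:R ^+ 3)
        = 2^-1 * (pell n)%:R ^+ 2 * (pell n.+1)%:R ^+ 2,
      \sum_(1 <= k < n.+1) ((4 : rat) ^+ (n - k)
            * (jacobsthal k.+1 + 2 * jacobsthal k.-1)%:R * (jacobsthal k)%:R ^+ 3)
        = (jacobsthal n)%:R ^+ 2 * (jacobsthal n.+1)%:R ^+ 2,
      \sum_(1 <= k < n.+1) ((4 : rat) ^+ (n - k) * (2 ^+ k + 1) * (2 ^+ k - 1) ^+ 3)
        = 3^-1 * (2 ^+ n - 1) ^+ 2 * (2 ^+ n.+1 - 1) ^+ 2
    & forall (R : fieldType) (q : R), q != 1 ->
      \sum_(1 <= k < n.+1) (q ^+ (2 * (n - k))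
            * ((1 - q ^+ (2 * k)) / (1 - q ^+ 2)) * ((1 - q ^+ k) / (1 - q)) ^+ 2)
        = gauss_binom2 q n ^+ 2].
Proof.
move=> _; split.
- exact: fib_cube_sum.
- exact: pell_cube_sum.
- exact: jacobsthal_cube_sum.
- exact: mersenne_cube_sum.
- by move=> R q; apply: q_integer_cube_sum.
Qed.
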